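(* Let $G$ be a digraph and $\mathbb F$ a field, and for sheaves $\mathcal F$ of finite-dimensional $\mathbb F$-vector spaces on $G$ put $\alpha_1(\mathcal F)={\rm m.e.}(\mathcal F)$ and $\alpha_0(\mathcal F)=\chi(\mathcal F)+{\rm m.e.}(\mathcal F)$. Then $\alpha_0,\alpha_1$ take non-negative values; $\alpha_i(\mathcal F_1\oplus\mathcal F_2)=\alpha_i(\mathcal F_1)+\alpha_i(\mathcal F_2)$ for $i=0,1$; and for every short exact sequence $0\to\mathcal F_1\to\mathcal F_2\to\mathcal F_3\to0$ of sheaves on $G$ the sequence $$0,\ \alpha_1(\mathcal F_1),\ \alpha_1(\mathcal F_2),\ \alpha_1(\mathcal F_3),\ \alpha_0(\mathcal F_1),\ \alpha_0(\mathcal F_2),\ \alpha_0(\mathcal F_3),\ 0$$ is triangular, i.e. each term other than the first and last is at most the sum of its two neighbours. (That is, the maximum excess is a first quasi-Betti number.)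
   Context: Digraphs (finite, multiple edges and loops allowed) and sheaves $\mathcal F$ on them: finite-dimensional $\mathbb F$-vector spaces $\mathcal F(P)$, $P\in V_G\sqcup E_G$, with linear maps $\mathcal F(t,e)\colon\mathcal F(e)\to\mathcal F(t_Ge)$, $\mathcal F(h,e)\colon\mathcal F(e)\to\mathcal F(h_Ge)$. $\mathcal F(V)=\bigoplus_v\mathcal F(v)$, $\mathcal F(E)=\bigoplus_e\mathcal F(e)$, $\chi(\mathcal F)=\dim\mathcal F(V)-\dim\mathcal F(E)$; $d_h,d_t\colon\mathcal F(E)\to\mathcal F(V)$ send the summand $\mathcal F(e)$ into $\mathcal F(h_Ge)$, resp. $\mathcal F(t_Ge)$, via the restriction maps. For a subspace $U\subset\mathcal F(V)$, $\Gamma_{\rm ht}(U)=\bigoplus_{e}\{w\in\mathcal F(e):d_hw\in U,\ d_tw\in U\}$, ${\rm excess}(\mathcal F,U)=\dim\Gamma_{\rm ht}(U)-\dim U$, ${\rm m.e.}(\mathcal F)=\max_U{\rm excess}(\mathcal F,U)$. A morphism of sheaves $\alpha\colon\mathcal F\to\mathcal G$ is a family of linear maps $\alpha_P\colon\mathcal F(P)\to\mathcal G(P)$ with $\mathcal G(t,e)\alpha_e=\alpha_{te}\mathcal F(t,e)$ and $\mathcal G(h,e)\alpha_e=\alpha_{he}\mathcal F(h,e)$; direct sums are taken valuewise, and a sequence of sheaves is exact iff it is exact at every $P\in V_G\sqcup E_G$. *)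

From HB Require Import structures.
From mathcomp Require Import all_boot all_order all_algebra.
From Stdlib Require Import ClassicalEpsilon.
Set Implicit Arguments. Unset Strict Implicit. Unset Printing Implicit Defensive.
Import Order.TTheory GRing.Theory Num.Theory.
Local Open Scope ring_scope.

Record digraph := Digraph {
  nV : nat; nE : nat;
  tailG : 'I_nE -> 'I_nV;
  headG : 'I_nE -> 'I_nV }.

(* A sheaf of finite-dimensional F-vector spaces on G.
   F(P) = 'rV[F]_(dim P); a linear map F(e) -> F(w) is a matrix
   'M_(dim e, dim w), acting on row vectors: x |-> x *m M. *)
Record sheaf (F : fieldType) (G : digraph) := Sheaf {
  dimV : 'I_(nV G) -> nat;
  dimE : 'I_(nE G) -> nat;
  resT : forall e, 'M[F]_(dimE e, dimV (tailG e));
  resH : forall e, 'M[F]_(dimE e, dimV (headG e)) }.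

Section SheafDefs.
Variables (F : fieldType) (G : digraph).
Implicit Types S : sheaf F G.

Definition totV S : nat := (\sum_(v < nV G) dimV S v)%N.
Definition totE S : nat := (\sum_(e < nE G) dimE S e)%N.

Definition chi S : int := (totV S)%:Z - (totE S)%:Z.

(* The matrix of F(e) -> F(V) = (+)_v F(v), sending F(e) into the summand
   F(w) via R : F(e) -> F(w). *)
Definition into_FV S (e : 'I_(nE G)) (w : 'I_(nV G))
    (R : 'M[F]_(dimE S e, dimV S w)) : 'M[F]_(dimE S e, totV S) :=
  mxrow (fun v : 'I_(nV G) =>
    (if w == v then conform_mx 0 R else 0 : 'M[F]_(dimE S e, dimV S v))).

(* restrictions of d_h, d_t to the summand F(e) *)
Definition dh_e S e : 'Hom('rV[F]_(dimE S e), 'rV[F]_(totV S)) :=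
  linfun (fun x : 'rV[F]_(dimE S e) => x *m into_FV (resH S e)).
Definition dt_e S e : 'Hom('rV[F]_(dimE S e), 'rV[F]_(totV S)) :=
  linfun (fun x : 'rV[F]_(dimE S e) => x *m into_FV (resT S e)).

(* e-component of Gamma_ht(U): {w in F(e) : d_h w in U, d_t w in U} *)
Definition Gamma_e S (U : {vspace 'rV[F]_(totV S)}) e
    : {vspace 'rV[F]_(dimE S e)} :=
  (dh_e S e @^-1: U :&: dt_e S e @^-1: U)%VS.

Definition dimGamma S (U : {vspace 'rV[F]_(totV S)}) : nat :=
  (\sum_(e < nE G) \dim (Gamma_e U e))%N.

Definition excess S (U : {vspace 'rV[F]_(totV S)}) : int :=
  (dimGamma U)%:Z - (\dim U)%:Z.

Definition cbool (P : Prop) : bool :=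
  if excluded_middle_informative P then true else false.

(* maximum excess: max_U excess(F,U).  Every excess lies in
   [-dim F(V), dim F(E)], so we maximise k = excess + dim F(V) over
   k < dim F(E) + dim F(V) + 1 (the set is nonempty: U = 0). *)
Definition max_excess S : int :=
  (\max_(k < (totE S + totV S).+1 |
           cbool (exists U : {vspace 'rV[F]_(totV S)},
                    excess U = k%:Z - (totV S)%:Z)) k)%:Z - (totV S)%:Z.

Definition alpha1 S : int := max_excess S.
Definition alpha0 S : int := chi S + max_excess S.

Definition dsum S1 S2 : sheaf F G :=
  @Sheaf F G (fun v => dimV S1 v + dimV S2 v)%N
    (fun e => dimE S1 e + dimE S2 e)%N
    (fun e => block_mx (resT S1 e) 0 0 (resT S2 e))
    (fun e => block_mx (resH S1 e) 0 0 (resH S2 e)).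

Record sh_maps S1 S2 := ShMaps {
  mapV : forall v, 'M[F]_(dimV S1 v, dimV S2 v);
  mapE : forall e, 'M[F]_(dimE S1 e, dimE S2 e) }.

(* morphism condition: G(t,e) alpha_e = alpha_{te} F(t,e), same for h
   (row-vector convention: composition f then g is A *m B) *)
Definition is_morphism S1 S2 (a : sh_maps S1 S2) : Prop :=
  forall e, mapE a e *m resT S2 e = resT S1 e *m mapV a (tailG e) /\
            mapE a e *m resH S2 e = resH S1 e *m mapV a (headG e).

End SheafDefs.

Definition short_exact (F : fieldType) m n p
    (A : 'M[F]_(m, n)) (B : 'M[F]_(n, p)) : bool :=
  [&& row_free A, (A == kermx B)%MS & row_full B].

Definition short_exact_seq (F : fieldType) (G : digraph)
    (S1 S2 S3 : sheaf F G) (a : sh_maps S1 S2) (b : sh_maps S2 S3) : Prop :=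
  [/\ is_morphism a, is_morphism b,
      (forall v, short_exact (mapV a v) (mapV b v)) &
      (forall e, short_exact (mapE a e) (mapE b e))].

Definition triangular (s : seq int) : Prop :=
  forall i : nat, (0 < i)%N -> (i.+1 < size s)%N ->
    s`_i <= s`_i.-1 + s`_i.+1.

From HB Require Import structures.
From mathcomp Require Import all_boot all_order all_algebra.
From mathcomp Require Import zify.
From Stdlib Require Import ClassicalEpsilon.
Import Order.TTheory GRing.Theory Num.Theory.
Set Implicit Arguments. Unset Strict Implicit. Unset Printing Implicit Defensive.
Local Open Scope ring_scope.

(* - An exact pair 0 -> T1 -f-> T2 -g-> T3 -> 0 of linear maps splits
     dimensions: dim W = dim f^-1(W) + dim g(W) for every W <= T2.
   - A morphism of sheaves a induces maps vmap a on F(V) (block diagonal)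
     and emap a e on each F(e) commuting with d_h, d_t; hence Gamma_ht
     commutes with preimages and is compatible with images.
   - For a short exact sequence 0 -> S1 -> S2 -> S3 -> 0 of sheaves, moving a
     subspace U along the sequence (image, preimage) and splitting dimensions
     gives m.e.(S1) <= m.e.(S2) <= m.e.(S1) + m.e.(S3),
     m.e.(S3) <= m.e.(S2) + chi(S1) and chi(S2) = chi(S1) + chi(S3); on a
     split sequence also m.e.(S1) + m.e.(S3) <= m.e.(S2).
   - U = 0 and U = F(V) give alpha1 >= 0 and alpha0 >= 0.
   Additivity on direct sums uses the split sequence S1 -> S1 (+) S2 -> S2;
   triangularity is then linear arithmetic on these inequalities. *)

(* Dimensions may occur in convertible but syntactically different forms
   (with or without coercion wrappers); abstracting them first lets lia
   treat them as the same atoms. *)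
Ltac dims_lia :=
  repeat match goal with
  | |- context [@dimv ?K ?T ?X] => let d := fresh "d" in set d := @dimv K T X
  | |- context [@dimGamma ?K ?H ?S ?X] =>
      let d := fresh "d" in set d := @dimGamma K H S X
  end; lia.

Section ExactPairs.
Variables (K : fieldType) (T1 T2 T3 : vectType K).
Implicit Types (f : 'Hom(T1, T2)) (g : 'Hom(T2, T3)).

Definition exact_pair f g : Prop :=
  [/\ injective f, forall y, g (f y) = 0,
      (forall x, g x = 0 -> exists y, x = f y) & forall z, exists x, z = g x].

Lemma dim_img_inj f U : injective f -> \dim (f @: U)%VS = \dim U.
Proof. by move=> /lker0P /eqP fK; apply: limg_dim_eq; rewrite fK capv0. Qed.

Lemma dim_img_le f U : (\dim (f @: U)%VS <= \dim U)%N.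
Proof. by rewrite -(limg_ker_dim f U) leq_addl. Qed.

Lemma exact_pair_lker f g : exact_pair f g -> lker g = limg f.
Proof.
case=> _ gf ker _; apply/vspaceP => x; rewrite memv_ker.
apply/eqP/memv_imgP => [/ker [y ->]|[y _ ->]]; last exact: gf.
by exists y; rewrite ?memvf.
Qed.

Lemma exact_pair_limg f g : exact_pair f g -> limg g = fullv.
Proof.
case=> _ _ _ sur; apply/vspaceP => z; rewrite memvf.
by have [x ->] := sur z; rewrite memv_img ?memvf.
Qed.

Lemma dim_preim_img f g (W : {vspace T2}) : exact_pair f g ->
  \dim W = (\dim (f @^-1: W)%VS + \dim (g @: W)%VS)%N.
Proof.
move=> ex; rewrite -(limg_ker_dim g W) (exact_pair_lker ex).
congr (_ + _)%N; rewrite -(@dim_img_inj f (f @^-1: W)%VS); last by case: ex.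
by rewrite -lpreim_cap_limg lpreimK ?capvSr.
Qed.

(* A preimage under the surjection g contains all of f(T1). *)
Lemma dim_preim_surj f g (W : {vspace T3}) : exact_pair f g ->
  \dim (g @^-1: W)%VS = (\dim {:T1} + \dim W)%N.
Proof.
move=> ex; rewrite (dim_preim_img _ ex) lpreimK; last first.
  by rewrite (exact_pair_limg ex) subvf.
congr (_ + _)%N; congr (\dim _); apply/vspaceP => y; rewrite memvf.
by case: ex => _ gf _ _; rewrite -!memv_preim gf mem0v.
Qed.

Lemma dim_exact f g : exact_pair f g -> \dim {:T2} = (\dim {:T1} + \dim {:T3})%N.
Proof.
move=> ex; rewrite -(dim_preim_surj fullv ex); congr (\dim _).
by apply/vspaceP => y; rewrite -memv_preim !memvf.
Qed.

Lemma dim_split_sum f g (h : 'Hom(T3, T2)) (A : {vspace T1}) (B : {vspace T3}) :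
  exact_pair f g -> (forall z, g (h z) = z) ->
  (\dim A + \dim B <= \dim (f @: A + h @: B))%N.
Proof.
move=> ex gh; rewrite (dim_preim_img _ ex) leq_add //; apply/dimvS/subvP.
  move=> x Ax; rewrite -memv_preim memvE (subv_trans _ (addvSl _ _)) //.
  by rewrite -memvE memv_img.
move=> z Bz; rewrite -[z]gh memv_img // memvE (subv_trans _ (addvSr _ _)) //.
by rewrite -memvE memv_img.
Qed.

End ExactPairs.

Definition mxmap (R : fieldType) m n (M : 'M[R]_(m, n)) :
    'Hom('rV[R]_m, 'rV[R]_n) :=
  linfun (mulmxr M).

Lemma mxmapE (R : fieldType) m n (M : 'M[R]_(m, n)) x : mxmap M x = x *m M.
Proof. by rewrite lfunE. Qed.

Lemma short_exact_pair (R : fieldType) m n p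
    (A : 'M[R]_(m, n)) (B : 'M[R]_(n, p)) :
  short_exact A B -> exact_pair (mxmap A) (mxmap B).
Proof.
case/and3P => /row_freeP [P AP] /andP [sAK sKA] /row_fullP [Q QB]; split.
- move=> x y; rewrite !mxmapE => xy.
  by rewrite -[x]mulmx1 -AP mulmxA xy -mulmxA AP mulmx1.
- by move=> y; rewrite !mxmapE -mulmxA (sub_kermxP sAK) mulmx0.
- move=> x; rewrite mxmapE => /sub_kermxP /submx_trans /(_ sKA) /submxP [D ->].
  by exists D; rewrite mxmapE.
- by move=> z; exists (z *m Q); rewrite mxmapE -mulmxA QB mulmx1.
Qed.

Section BlockDiagonal.
Variables (R : fieldType) (n : nat) (p q : 'I_n -> nat).

Definition diag_fun (A : forall v, 'M[R]_(p v, q v))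
    (x : 'rV[R]_(\sum_(v < n) p v)) : 'rV[R]_(\sum_(v < n) q v) :=
  \mxrow_v (submxrow x v *m A v).

Lemma diag_funK A x v : submxrow (diag_fun A x) v = submxrow x v *m A v.
Proof. by rewrite /diag_fun mxrowK. Qed.

Fact diag_fun_semilinear A : semilinear (diag_fun A).
Proof.
have submxrowZ m (s : 'I_m -> nat) c (y : 'rV[R]_(\sum_(v < m) s v)) w :
    submxrow (c *: y) w = c *: submxrow y w.
  by apply/matrixP => i j; rewrite !mxE.
split=> [c x|x y]; apply/mxrowP => v.
  by rewrite !submxrowZ !diag_funK submxrowZ scalemxAl.
by rewrite submxrowD !diag_funK submxrowD mulmxDl.
Qed.

HB.instance Definition _ A :=
  GRing.isSemilinear.Build R _ _ _ (diag_fun A) (diag_fun_semilinear A).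

Definition diagmap A :
    'Hom('rV[R]_(\sum_(v < n) p v), 'rV[R]_(\sum_(v < n) q v)) :=
  linfun (diag_fun A).

Lemma diagmapK A x v : submxrow (diagmap A x) v = submxrow x v *m A v.
Proof. by rewrite lfunE diag_funK. Qed.

End BlockDiagonal.

Lemma exact_pair_diag (R : fieldType) n (p q r : 'I_n -> nat)
    (A : forall v, 'M[R]_(p v, q v)) (B : forall v, 'M[R]_(q v, r v)) :
  (forall v, exact_pair (mxmap (A v)) (mxmap (B v))) ->
  exact_pair (diagmap A) (diagmap B).
Proof.
move=> exAB; split.
- move=> x y xy; apply/mxrowP => v; have [injA _ _ _] := exAB v.
  by apply: injA; rewrite !mxmapE -!diagmapK xy.
- move=> y; apply/mxrowP => v; have [_ BA _ _] := exAB v.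
  by have := BA (submxrow y v); rewrite !diagmapK submxrow0 !mxmapE.
- move=> x Bx.
  have kerB v : exists y, submxrow x v = y *m A v.
    have [_ _ kerB _] := exAB v.
    have [|y ->] := kerB (submxrow x v); last by exists y; rewrite mxmapE.
    by rewrite mxmapE -diagmapK Bx submxrow0.
  have [y Hy] := fin_all_exists kerB.
  by exists (\mxrow_v y v); apply/mxrowP => v; rewrite diagmapK mxrowK Hy.
- move=> z.
  have surB v : exists x, submxrow z v = x *m B v.
    have [_ _ _ surB] := exAB v; have [x ->] := surB (submxrow z v).
    by exists x; rewrite mxmapE.
  have [x Hx] := fin_all_exists surB.
  by exists (\mxrow_v x v); apply/mxrowP => v; rewrite diagmapK mxrowK Hx.
Qed.

Lemma dim_rV (R : fieldType) n : \dim {:'rV[R]_n} = n.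
Proof. by rewrite dimvf dim_matrix mul1r. Qed.

Section SheafMaps.
Variables (F : fieldType) (G : digraph).
Implicit Types S : sheaf F G.

Definition vmap S1 S2 (a : sh_maps S1 S2) :
  'Hom('rV[F]_(totV S1), 'rV[F]_(totV S2)) := diagmap (mapV a).
Definition emap S1 S2 (a : sh_maps S1 S2) e :
  'Hom('rV[F]_(dimE S1 e), 'rV[F]_(dimE S2 e)) := mxmap (mapE a e).

Lemma into_FV_natural S1 S2 (a : sh_maps S1 S2) e w
    (R1 : 'M[F]_(dimE S1 e, dimV S1 w)) (R2 : 'M[F]_(dimE S2 e, dimV S2 w)) x :
  mapE a e *m R2 = R1 *m mapV a w ->
  x *m mapE a e *m into_FV R2 = vmap a (x *m into_FV R1).
Proof.
move=> aR; apply/mxrowP => v; rewrite diagmapK /into_FV !mul_mxrow !mxrowK.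
case: eqP => [<-|_]; last by rewrite !mulmx0 mul0mx.
by rewrite !conform_mx_id -!mulmxA aR mulmxA.
Qed.

Lemma dh_eE S e x : dh_e S e x = x *m into_FV (resH S e).
Proof. exact: (lfunE (mulmxr _)). Qed.

Lemma dt_eE S e x : dt_e S e x = x *m into_FV (resT S e).
Proof. exact: (lfunE (mulmxr _)). Qed.

Lemma restriction_natural S1 S2 (a : sh_maps S1 S2) e x : is_morphism a ->
  dh_e S2 e (emap a e x) = vmap a (dh_e S1 e x) /\
  dt_e S2 e (emap a e x) = vmap a (dt_e S1 e x).
Proof.
move=> /(_ e) [aT aH].
by rewrite /emap mxmapE !dh_eE !dt_eE; split; apply: into_FV_natural.
Qed.

Lemma Gamma_preim S1 S2 (a : sh_maps S1 S2) e (U : {vspace 'rV[F]_(totV S2)}) :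
  is_morphism a ->
  Gamma_e (vmap a @^-1: U)%VS e = (emap a e @^-1: Gamma_e U e)%VS.
Proof.
move=> Ha; apply/vspaceP => x.
rewrite -memv_preim /Gamma_e !memv_cap -!memv_preim.
by have [-> ->] := restriction_natural x Ha.
Qed.

Lemma Gamma_img S1 S2 (a : sh_maps S1 S2) e (U : {vspace 'rV[F]_(totV S1)}) :
  is_morphism a -> (emap a e @: Gamma_e U e <= Gamma_e (vmap a @: U) e)%VS.
Proof.
move=> Ha; apply/subvP => _ /memv_imgP [x Ux ->].
move: Ux; rewrite /Gamma_e !memv_cap -!memv_preim => /andP [hU tU].
by have [-> ->] := restriction_natural x Ha; rewrite !memv_img.
Qed.

Lemma Gamma_mono S (U U' : {vspace 'rV[F]_(totV S)}) e :
  (U <= U')%VS -> (Gamma_e U e <= Gamma_e U' e)%VS.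
Proof. by move=> sUU'; rewrite /Gamma_e capvS ?lpreimS. Qed.

Lemma Gamma_full S e : Gamma_e (fullv : {vspace 'rV[F]_(totV S)}) e = fullv.
Proof. by apply/vspaceP => x; rewrite /Gamma_e memv_cap -!memv_preim !memvf. Qed.

Definition exact_maps S1 S2 S3 (a : sh_maps S1 S2) (b : sh_maps S2 S3) : Prop :=
  [/\ is_morphism a, is_morphism b, exact_pair (vmap a) (vmap b)
    & forall e, exact_pair (emap a e) (emap b e)].

Lemma short_exact_seq_maps S1 S2 S3 (a : sh_maps S1 S2) (b : sh_maps S2 S3) :
  short_exact_seq a b -> exact_maps a b.
Proof.
case=> Ha Hb exV exE; split => //.
  by apply: exact_pair_diag => v; apply: short_exact_pair.
by move=> e; apply: short_exact_pair.
Qed.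

End SheafMaps.

Lemma cboolP (P : Prop) : cbool P -> P.
Proof. by rewrite /cbool; case: excluded_middle_informative. Qed.

Lemma cboolT (P : Prop) : P -> cbool P.
Proof. by rewrite /cbool; case: excluded_middle_informative. Qed.

Section MaxExcess.
Variables (F : fieldType) (G : digraph) (S : sheaf F G).
Implicit Types U : {vspace 'rV[F]_(totV S)}.

(* Both terms of an excess are bounded, so the maximum is over a finite range. *)
Lemma dim_le_totV U : (\dim U <= totV S)%N.
Proof. by have := dimvS (subvf U); rewrite dim_rV. Qed.

Lemma dimGamma_le_totE U : (dimGamma U <= totE S)%N.
Proof.
by apply: leq_sum => e _; have := dimvS (subvf (Gamma_e U e)); rewrite dim_rV.
Qed.

Lemma excess_index U : exists2 k : 'I_(totE S + totV S).+1,
    cbool (exists U', excess U' = k%:Z - (totV S)%:Z)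
  & excess U = k%:Z - (totV S)%:Z.
Proof.
have dU := dim_le_totV U; have dG := dimGamma_le_totE U.
have kP : (dimGamma U + totV S - \dim U < (totE S + totV S).+1)%N by lia.
by exists (Ordinal kP); [apply: cboolT; exists U|]; rewrite /excess /=; lia.
Qed.

Lemma excess_le_max U : excess U <= max_excess S.
Proof.
have [k kP ->] := excess_index U; rewrite /max_excess lerD2r lez_nat.
exact: leq_bigmax_cond kP.
Qed.

Lemma max_excess_attained : exists U, max_excess S = excess U.
Proof.
have [k kP _] := excess_index 0.
rewrite /max_excess (bigop.bigmax_eq_arg k kP).
by case: arg_maxnP => //= i /cboolP [U eU] _; exists U; rewrite eU.
Qed.

(* U = 0 has nonnegative excess. *)
Lemma max_excess_ge0 : 0 <= max_excess S.
Proof. by have := excess_le_max 0; rewrite /excess dimv0; lia. Qed.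

(* U = F(V) has excess dim F(E) - dim F(V) = -chi. *)
Lemma alpha0_ge0 : 0 <= chi S + max_excess S.
Proof.
have := excess_le_max fullv; rewrite /excess /chi dim_rV.
have -> : dimGamma (fullv : {vspace 'rV[F]_(totV S)}) = totE S.
  by apply: eq_bigr => e _; rewrite Gamma_full dim_rV.
lia.
Qed.

End MaxExcess.

Section ShortExact.
Variables (F : fieldType) (G : digraph) (S1 S2 S3 : sheaf F G).
Variables (a : sh_maps S1 S2) (b : sh_maps S2 S3).
Hypothesis ab_exact : exact_maps a b.

(* Pushing forward along the injection a: m.e.(S1) <= m.e.(S2). *)
Lemma max_excess_sub : max_excess S1 <= max_excess S2.
Proof.
have [Ha _ [injV _ _ _] exE] := ab_exact; have [U1 ->] := max_excess_attained S1.
apply: le_trans (excess_le_max (vmap a @: U1)%VS); rewrite /excess dim_img_inj //.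
suff : (dimGamma U1 <= dimGamma (vmap a @: U1)%VS)%N by dims_lia.
apply: leq_sum => e _; have [injE _ _ _] := exE e.
by rewrite -(dim_img_inj _ injE) dimvS ?Gamma_img.
Qed.

(* Splitting U in S2 into a^-1(U) and b(U): m.e.(S2) <= m.e.(S1) + m.e.(S3). *)
Lemma max_excess_subadd : max_excess S2 <= max_excess S1 + max_excess S3.
Proof.
have [Ha Hb exV exE] := ab_exact; have [U ->] := max_excess_attained S2.
have e1 := excess_le_max (vmap a @^-1: U)%VS.
have e3 := excess_le_max (vmap b @: U)%VS.
have dU := dim_preim_img U exV.
have dG : (dimGamma U <=
           dimGamma (vmap a @^-1: U)%VS + dimGamma (vmap b @: U)%VS)%N.
  rewrite /dimGamma -big_split; apply: leq_sum => e _ /=.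
  rewrite (dim_preim_img (Gamma_e U e) (exE e)) Gamma_preim //.
  by rewrite leq_add2l dimvS ?Gamma_img.
move: e1 e3 dG; rewrite /excess dU; dims_lia.
Qed.

(* Pulling back U3 along b: m.e.(S3) <= m.e.(S2) + chi(S1). *)
Lemma max_excess_quot : max_excess S3 <= max_excess S2 + chi S1.
Proof.
have [_ Hb exV exE] := ab_exact; have [U3 ->] := max_excess_attained S3.
have e2 := excess_le_max (vmap b @^-1: U3)%VS.
have dU := dim_preim_surj U3 exV; rewrite dim_rV in dU.
have dG : dimGamma (vmap b @^-1: U3)%VS = (totE S1 + dimGamma U3)%N.
  rewrite /dimGamma /totE -big_split; apply: eq_bigr => e _ /=.
  by rewrite Gamma_preim // (dim_preim_surj _ (exE e)) dim_rV.
move: e2; rewrite /excess /chi dU dG; dims_lia.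
Qed.

Lemma chi_additive : chi S2 = chi S1 + chi S3.
Proof.
have [_ _ exV exE] := ab_exact.
have dV := dim_exact exV; rewrite !dim_rV in dV.
have dE : totE S2 = (totE S1 + totE S3)%N.
  rewrite /totE -big_split; apply: eq_bigr => e _ /=.
  by have := dim_exact (exE e); rewrite !dim_rV.
rewrite /chi dV dE; lia.
Qed.

(* If the sequence is split on edges by a morphism c with b c = 1, the
   images of U1 and U3 in S2 combine: m.e.(S1) + m.e.(S3) <= m.e.(S2). *)
Lemma max_excess_split (c : sh_maps S3 S2) : is_morphism c ->
    (forall e x, emap b e (emap c e x) = x) ->
  max_excess S1 + max_excess S3 <= max_excess S2.
Proof.
move=> Hc bc; have [Ha _ _ exE] := ab_exact.
have [U1 ->] := max_excess_attained S1; have [U3 ->] := max_excess_attained S3.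
pose U := (vmap a @: U1 + vmap c @: U3)%VS.
have dU : (\dim U <= \dim U1 + \dim U3)%N.
  by apply: leq_trans (dimv_add_leqif _ _).1 _; rewrite leq_add ?dim_img_le.
have dG : (dimGamma U1 + dimGamma U3 <= dimGamma U)%N.
  rewrite /dimGamma -big_split; apply: leq_sum => e _ /=.
  apply: leq_trans (dim_split_sum _ _ (exE e) (bc e)) (dimvS _).
  rewrite subv_add (subv_trans (Gamma_img _ _ Ha)) ?Gamma_mono ?addvSl //=.
  by rewrite (subv_trans (Gamma_img _ _ Hc)) ?Gamma_mono ?addvSr.
move: (excess_le_max U) dU dG; rewrite /excess; dims_lia.
Qed.

End ShortExact.

Lemma exact_pair_inl_pr2 (R : fieldType) m n :
  exact_pair (mxmap (row_mx 1%:M (0 : 'M[R]_(m, n))))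
             (mxmap (col_mx (0 : 'M[R]_(m, n)) 1%:M)).
Proof.
split.
- by move=> x y; rewrite !mxmapE !mul_mx_row !mulmx1 !mulmx0 => /eq_row_mx [].
- by move=> y; rewrite !mxmapE -mulmxA mul_row_col mul1mx mul0mx addr0 mulmx0.
- move=> x; rewrite mxmapE -[x]hsubmxK mul_row_col mulmx0 mulmx1 add0r => ->.
  by exists (lsubmx x); rewrite mxmapE mul_mx_row mulmx1 mulmx0.
- move=> z; exists (row_mx 0 z).
  by rewrite mxmapE mul_row_col mul0mx mulmx1 add0r.
Qed.

Section DirectSum.
Variables (F : fieldType) (G : digraph) (S1 S2 : sheaf F G).

Definition dsum_inl : sh_maps S1 (dsum S1 S2) :=
  @ShMaps F G S1 (dsum S1 S2)
    (fun v => row_mx 1%:M (0 : 'M_(dimV S1 v, dimV S2 v)))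
    (fun e => row_mx 1%:M (0 : 'M_(dimE S1 e, dimE S2 e))).
Definition dsum_inr : sh_maps S2 (dsum S1 S2) :=
  @ShMaps F G S2 (dsum S1 S2)
    (fun v => row_mx (0 : 'M_(dimV S2 v, dimV S1 v)) 1%:M)
    (fun e => row_mx (0 : 'M_(dimE S2 e, dimE S1 e)) 1%:M).
Definition dsum_pr2 : sh_maps (dsum S1 S2) S2 :=
  @ShMaps F G (dsum S1 S2) S2
    (fun v => col_mx (0 : 'M_(dimV S1 v, dimV S2 v)) 1%:M)
    (fun e => col_mx (0 : 'M_(dimE S1 e, dimE S2 e)) 1%:M).

Lemma dsum_inl_morphism : is_morphism dsum_inl.
Proof.
by move=> e /=; split;
  rewrite mul_row_block mul_mx_row !mul1mx !mul0mx !addr0 mulmx1 mulmx0.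
Qed.

Lemma dsum_inr_morphism : is_morphism dsum_inr.
Proof.
by move=> e /=; split;
  rewrite mul_row_block mul_mx_row !mul1mx !mul0mx !add0r mulmx1 mulmx0.
Qed.

Lemma dsum_pr2_morphism : is_morphism dsum_pr2.
Proof.
by move=> e /=; split;
  rewrite mul_block_col mul_col_mx !mulmx1 !mulmx0 !mul0mx !addr0 !add0r mul1mx.
Qed.

Lemma dsum_exact : exact_maps dsum_inl dsum_pr2.
Proof.
split; [exact: dsum_inl_morphism | exact: dsum_pr2_morphism | |].
  by apply: exact_pair_diag => v; apply: exact_pair_inl_pr2.
by move=> e; apply: exact_pair_inl_pr2.
Qed.

Lemma dsum_pr2_inr e x : emap dsum_pr2 e (emap dsum_inr e x) = x.
Proof. by rewrite !mxmapE -mulmxA mul_row_col mul0mx mulmx1 add0r mulmx1. Qed.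

Lemma chi_dsum : chi (dsum S1 S2) = chi S1 + chi S2.
Proof. exact: chi_additive dsum_exact. Qed.

Lemma max_excess_dsum : max_excess (dsum S1 S2) = max_excess S1 + max_excess S2.
Proof.
apply: le_anti; rewrite (max_excess_subadd dsum_exact) /=.
apply: (max_excess_split dsum_exact dsum_inr_morphism) => e x.
exact: dsum_pr2_inr.
Qed.

End DirectSum.

Theorem theorem1p5 (F : fieldType) (G : digraph) :
  (forall S : sheaf F G, 0 <= alpha0 S /\ 0 <= alpha1 S) /\
  (forall S1 S2 : sheaf F G,
     alpha0 (dsum S1 S2) = alpha0 S1 + alpha0 S2 /\
     alpha1 (dsum S1 S2) = alpha1 S1 + alpha1 S2) /\
  (forall (S1 S2 S3 : sheaf F G) (a : sh_maps S1 S2) (b : sh_maps S2 S3),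
     short_exact_seq a b ->
     triangular [:: 0; alpha1 S1; alpha1 S2; alpha1 S3;
                    alpha0 S1; alpha0 S2; alpha0 S3; 0]).
Proof.
split; first by move=> S; split; [exact: alpha0_ge0 | exact: max_excess_ge0].
split.
  move=> S1 S2; rewrite /alpha0 /alpha1 chi_dsum max_excess_dsum.
  by split; rewrite // addrACA.
move=> S1 S2 S3 a b /short_exact_seq_maps ex.
have m12 := max_excess_sub ex; have m213 := max_excess_subadd ex.
have m321 := max_excess_quot ex; have c213 := chi_additive ex.
have m1 := max_excess_ge0 S1; have p3 := alpha0_ge0 S3.
(* Positions 1..6 of the sequence follow, respectively, from max_excess_sub,
   max_excess_subadd, max_excess_quot (with m.e.(S1) >= 0), max_excess_sub
   (with alpha0(S3) >= 0), max_excess_subadd and max_excess_quot, using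
   chi(S2) = chi(S1) + chi(S3). *)
rewrite /triangular /alpha0 /alpha1.
by move=> [|[|[|[|[|[|[|i]]]]]]] //= _ _; lia.
Qed.
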